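(* Let $X$ be a finite connected poset, $\theta\in\mathcal{M}(X)$, and let $C:x_1<\dots<x_n$ and $D:y_1<\dots<y_m$ be maximal chains of $X$. Assume $x_i=y_j$ for some $1<i<n$ and $1<j<m$. If $\theta$ is increasing (resp. decreasing) on $C$, then it is increasing (resp. decreasing) on $D$. Moreover, if $\theta(C):u_1<\dots<u_n$ and $\theta(D):v_1<\dots<v_m$, then $u_i=v_j$ (resp. $u_{n-i+1}=v_{m-j+1}$).
   Context: For $x<y$, $e_{xy}$ denotes the incidence-algebra basis element and $B=\{e_{xy}:x<y\}$. For a bijection $\theta:B\to B$ and a maximal chain $C:u_1<\dots<u_k$, $\theta$ is increasing on $C$ if there is a maximal chain $D':v_1<\dots<v_k$ with $\theta(e_{u_pu_q})=e_{v_pv_q}$ for all $p<q$, and decreasing if there is such $D'$ with $\theta(e_{u_pu_q})=e_{v_{k-q+1}v_{k-p+1}}$ for all $p<q$; in either case $\theta(C)$ denotes $D'$. $\mathcal{M}(X)$ is the set of bijections $B\to B$ increasing or decreasing on every maximal chain. *)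

From HB Require Import structures.
From mathcomp Require Import all_boot all_order.
Set Implicit Arguments. Unset Strict Implicit. Unset Printing Implicit Defensive.
Import Order.TTheory.
Local Open Scope order_scope.

Section Defs.
Context {disp : Order.disp_t} {X : finPOrderType disp}.

(** The basis B = { e_xy : x < y } of the incidence algebra, as a finite type. *)
Definition Bt := {p : X * X | p.1 < p.2}.

Definition poset_connected := forall x y : X, connect (fun a b : X => a >=< b) x y.

Definition is_chain (s : seq X) := sorted <%O s.

Definition max_chain (s : seq X) :=
  is_chain s /\ forall t, is_chain t -> {subset s <= t} -> {subset t <= s}.

Definition incr_with (theta : Bt -> Bt) (C : seq X) (D : (size C).-tuple X) :=
  max_chain D /\
  forall (p q : 'I_(size C)) (b : Bt), (p < q)%N ->
    val b = (tnth (in_tuple C) p, tnth (in_tuple C) q) ->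
    val (theta b) = (tnth D p, tnth D q).

Definition decr_with (theta : Bt -> Bt) (C : seq X) (D : (size C).-tuple X) :=
  max_chain D /\
  forall (p q : 'I_(size C)) (b : Bt), (p < q)%N ->
    val b = (tnth (in_tuple C) p, tnth (in_tuple C) q) ->
    val (theta b) = (tnth D (rev_ord q), tnth D (rev_ord p)).

Definition increasing_on theta C := exists D, @incr_with theta C D.
Definition decreasing_on theta C := exists D, @decr_with theta C D.

Definition in_M (theta : Bt -> Bt) :=
  bijective theta /\
  forall C, max_chain C -> increasing_on theta C \/ decreasing_on theta C.

End Defs.

(** If a < z < c and K is a maximal chain through a, z and c, then theta is
    increasing or decreasing on K, so the images of e_az and e_zc are glued
    at one end: theta(e_az) ends where theta(e_zc) starts, or theta(e_zc) ends
    where theta(e_az) starts.  Apply this with a the bottom of C,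
    z = x_i = y_j and c the top of D, reading theta(e_az) off theta(C) and
    theta(e_zc) off theta(D).  Every alternative except the claimed one puts
    an element strictly below the bottom of theta(C) or of theta(D), which is
    impossible because the bottom of a maximal chain is a minimal element. *)

From mathcomp Require Import all_boot all_order.
From Stdlib Require Import Classical.
From mathcomp Require Import zify.
Set Implicit Arguments. Unset Strict Implicit. Unset Printing Implicit Defensive.
Import Order.TTheory.
Local Open Scope order_scope.

Section Chains.
Context {disp : Order.disp_t} {X : finPOrderType disp}.
Implicit Types (s t : seq X) (x y : X).

Lemma chain_tnth_lt n (W : n.-tuple X) (p q : 'I_n) :
  is_chain W -> (tnth W p < tnth W q) = (p < q)%N.
Proof.
move=> W_chain; have x0 := tnth W p; rewrite !(tnth_nth x0).
by rewrite (lt_sorted_ltn_nth _ W_chain) // inE size_tuple.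
Qed.

Lemma chain_size_le_card t : is_chain t -> (size t <= #|X|)%N.
Proof. by move=> /lt_sorted_uniq/card_uniqP <-; apply: max_card. Qed.

Lemma chain_sub_max_chain t : is_chain t -> exists2 K, max_chain K & {subset t <= K}.
Proof.
have [n] := ubnP (#|X| - size t); elim: n t => // n IH t lt_n t_chain.
case: (classic (max_chain t)) => [t_max|not_max]; first by exists t.
have [t' [t'_chain sub nsub]] :
    exists t', [/\ is_chain t', {subset t <= t'} & ~ {subset t' <= t}].
  apply: NNPP => no_ext; apply: not_max; split=> // t' t'_chain sub.
  by apply: NNPP => nsub; apply: no_ext; exists t'.
have lt_size : (size t < size t')%N.
  rewrite ltnNge; apply/negP=> le_size; apply: nsub => x.
  by have [_ ->] := uniq_min_size (lt_sorted_uniq t_chain) sub le_size.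
have t'_le := chain_size_le_card t'_chain.
have [|K K_max sub'] := IH t' _ t'_chain; first lia.
by exists K => // x /sub/sub'.
Qed.

Lemma max_chain_head_minimal s x0 y : max_chain s -> ~~ (y < head x0 s).
Proof.
case=> s_chain s_max; apply/negP=> y_lt.
have ys_chain : is_chain (y :: s).
  by case: s s_chain y_lt {s_max} => //= x s' -> ->.
have sub : {subset s <= y :: s} by move=> x xs; rewrite inE xs orbT.
have := s_max _ ys_chain sub y (mem_head y s).
case: s {s_max ys_chain sub} s_chain y_lt => //= x s' /(order_path_min lt_trans)/allP.
move=> s'_gt y_lt; rewrite inE => /predU1P[y_x | /s'_gt x_lt].
  by rewrite y_x ltxx in y_lt.
by have := lt_trans y_lt x_lt; rewrite ltxx.
Qed.

Lemma max_chain_tnth0_minimal n (W : n.-tuple X) (p : 'I_n) y :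
  max_chain W -> nat_of_ord p = 0%N -> ~~ (y < tnth W p).
Proof.
by move=> W_max p0; rewrite (tnth_nth y) p0 nth0; apply: max_chain_head_minimal.
Qed.

Lemma in_M_glue theta (b1 b2 : Bt (X := X)) a z c :
  in_M theta -> val b1 = (a, z) -> val b2 = (z, c) ->
  (val (theta b1)).2 = (val (theta b2)).1 \/ (val (theta b2)).2 = (val (theta b1)).1.
Proof.
move=> thetaM e1 e2.
have az : a < z by have := valP b1; rewrite e1.
have zc : z < c by have := valP b2; rewrite e2.
have [|K K_max sub] := chain_sub_max_chain (t := [:: a; z; c]).
  by rewrite /is_chain /= az zc.
have [p a_p] : exists p, a = tnth (in_tuple K) p by apply/tnthP/sub; rewrite !inE eqxx.
have [q z_q] : exists q, z = tnth (in_tuple K) q.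
  by apply/tnthP/sub; rewrite !inE eqxx orbT.
have [r c_r] : exists r, c = tnth (in_tuple K) r.
  by apply/tnthP/sub; rewrite !inE eqxx !orbT.
have K_chain : is_chain (in_tuple K) by case: K_max.
have pq : (p < q)%N by rewrite -(chain_tnth_lt _ _ K_chain) -a_p -z_q.
have qr : (q < r)%N by rewrite -(chain_tnth_lt _ _ K_chain) -z_q -c_r.
rewrite a_p z_q c_r in e1 e2.
case: (thetaM.2 K K_max) => [[W [_ W_img]] | [W [_ W_img]]].
- by left; rewrite (W_img _ _ _ pq e1) (W_img _ _ _ qr e2).
- by right; rewrite (W_img _ _ _ pq e1) (W_img _ _ _ qr e2).
Qed.

Section SharedInteriorPoint.
Variables (theta : Bt (X := X) -> Bt (X := X)) (C D : seq X).
Variables (i : 'I_(size C)) (j : 'I_(size D)).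
Hypotheses (thetaM : in_M theta) (C_max : max_chain C) (D_max : max_chain D).
Hypotheses (i_gt0 : (0 < i)%N) (j_lt_last : (j.+1 < size D)%N).
Hypothesis shared : tnth (in_tuple C) i = tnth (in_tuple D) j.

Let c0 : 'I_(size C) := Ordinal (leq_ltn_trans (leq0n i) (ltn_ord i)).
Let d0 : 'I_(size D) := Ordinal (leq_ltn_trans (leq0n j) (ltn_ord j)).

Fact j_lt_top : (j < rev_ord d0)%N.
Proof. by rewrite /= ltn_subRL add1n. Qed.

Fact d0_lt_top : (d0 < rev_ord d0)%N.
Proof. exact: leq_ltn_trans (leq0n j) j_lt_top. Qed.

Fact d0_lt_rev_j : (d0 < rev_ord j)%N.
Proof. by rewrite /= subn_gt0. Qed.

Fact rev_i_lt_rev_c0 : (rev_ord i < rev_ord c0)%N.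
Proof. by have := ltn_ord i; rewrite /=; lia. Qed.

Fact bottom_lt_shared : tnth (in_tuple C) c0 < tnth (in_tuple C) i.
Proof. by rewrite chain_tnth_lt //; case: C_max. Qed.

Fact shared_lt_top : tnth (in_tuple C) i < tnth (in_tuple D) (rev_ord d0).
Proof. by rewrite shared chain_tnth_lt ?j_lt_top //; case: D_max. Qed.

Let e_az : Bt (X := X) := exist _ (_, _) bottom_lt_shared.
Let e_zc : Bt (X := X) := exist _ (_, _) shared_lt_top.

Fact e_az_incr (U : (size C).-tuple X) :
  incr_with theta U -> val (theta e_az) = (tnth U c0, tnth U i).
Proof. by case=> _ /(_ c0 i e_az i_gt0 erefl). Qed.

Fact e_az_decr (U : (size C).-tuple X) :
  decr_with theta U -> val (theta e_az) = (tnth U (rev_ord i), tnth U (rev_ord c0)).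
Proof. by case=> _ /(_ c0 i e_az i_gt0 erefl). Qed.

Fact e_zc_incr (V : (size D).-tuple X) :
  incr_with theta V -> val (theta e_zc) = (tnth V j, tnth V (rev_ord d0)).
Proof. by case=> _ /(_ j (rev_ord d0) e_zc j_lt_top); rewrite /= shared; apply. Qed.

Fact e_zc_decr (V : (size D).-tuple X) :
  decr_with theta V -> val (theta e_zc) = (tnth V d0, tnth V (rev_ord j)).
Proof.
by case=> _ /(_ j (rev_ord d0) e_zc j_lt_top); rewrite /= shared rev_ordK; apply.
Qed.

Fact e_az_e_zc_glue :
  (val (theta e_az)).2 = (val (theta e_zc)).1 \/
  (val (theta e_zc)).2 = (val (theta e_az)).1.
Proof. exact: in_M_glue. Qed.

Lemma incr_with_shared_point (U : (size C).-tuple X) (V : (size D).-tuple X) :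
  incr_with theta U -> incr_with theta V -> tnth U i = tnth V j.
Proof.
move=> U_incr V_incr; have := e_az_e_zc_glue.
rewrite (e_az_incr U_incr) (e_zc_incr V_incr) /= => -[// | V_top].
have V_chain : is_chain V by case: V_incr.1.
have := max_chain_tnth0_minimal (tnth V d0) U_incr.1 (erefl : c0 = 0%N :> nat).
by rewrite -V_top chain_tnth_lt // d0_lt_top.
Qed.

Lemma decr_with_shared_point (U : (size C).-tuple X) (V : (size D).-tuple X) :
  decr_with theta U -> decr_with theta V -> tnth U (rev_ord i) = tnth V (rev_ord j).
Proof.
move=> U_decr V_decr; have := e_az_e_zc_glue.
rewrite (e_az_decr U_decr) (e_zc_decr V_decr) /= => -[U_top | //].
have U_chain : is_chain U by case: U_decr.1.
have := max_chain_tnth0_minimal (tnth U (rev_ord i)) V_decr.1 (erefl : d0 = 0%N :> nat).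
by rewrite -U_top chain_tnth_lt // rev_i_lt_rev_c0.
Qed.

Lemma not_incr_decr_shared_point (U : (size C).-tuple X) (V : (size D).-tuple X) :
  incr_with theta U -> decr_with theta V -> False.
Proof.
move=> U_incr V_decr; have := e_az_e_zc_glue.
rewrite (e_az_incr U_incr) (e_zc_decr V_decr) /= => -[U_i | V_j].
- have U_chain : is_chain U by case: U_incr.1.
  have := max_chain_tnth0_minimal (tnth U c0) V_decr.1 (erefl : d0 = 0%N :> nat).
  by rewrite -U_i chain_tnth_lt // i_gt0.
- have V_chain : is_chain V by case: V_decr.1.
  have := max_chain_tnth0_minimal (tnth V d0) U_incr.1 (erefl : c0 = 0%N :> nat).
  by rewrite -V_j chain_tnth_lt // d0_lt_rev_j.
Qed.

End SharedInteriorPoint.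

End Chains.

Theorem lemma3p5 (disp : Order.disp_t) (X : finPOrderType disp)
  (theta : @Bt disp X -> @Bt disp X) (C D : seq X)
  (i : 'I_(size C)) (j : 'I_(size D)) :
  poset_connected (X := X) -> in_M theta ->
  max_chain C -> max_chain D ->
  (0 < i)%N -> (i.+1 < size C)%N -> (0 < j)%N -> (j.+1 < size D)%N ->
  tnth (in_tuple C) i = tnth (in_tuple D) j ->
  (increasing_on theta C ->
     increasing_on theta D /\
     forall (U : (size C).-tuple X) (V : (size D).-tuple X),
       incr_with theta U -> incr_with theta V -> tnth U i = tnth V j) /\
  (decreasing_on theta C ->
     decreasing_on theta D /\
     forall (U : (size C).-tuple X) (V : (size D).-tuple X),
       decr_with theta U -> decr_with theta V ->
       tnth U (rev_ord i) = tnth V (rev_ord j)).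
Proof.
move=> _ thetaM C_max D_max i_gt0 i_lt j_gt0 j_lt shared; split.
- case=> U U_incr; split=> [|U' V']; last exact: incr_with_shared_point.
  case: (thetaM.2 D D_max) => // -[V V_decr].
  by case: (not_incr_decr_shared_point thetaM C_max D_max i_gt0 j_lt shared
                                      U_incr V_decr).
- case=> U U_decr; split=> [|U' V']; last exact: decr_with_shared_point.
  case: (thetaM.2 D D_max) => [[V V_incr] | //].
  by case: (not_incr_decr_shared_point thetaM D_max C_max j_gt0 i_lt (esym shared)
                                      V_incr U_decr).
Qed.
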